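(* Let $\Gamma$ be a connected $\mathbb Z$-leg-weighted graph with edge set $E$, and let $w_1,w_2\in W(\Gamma)$ be two weightings. Then $c_{w_1}\cap c_{w_2}$ is a face of $c_{w_1}$.
   Context: A graph consists of a finite set $V$ of vertices, a finite set $H$ of half-edges, a map $\mathrm{end}\colon H\to V$, an involution $i$ of $H$, a genus function $g\colon V\to\mathbb Z_{\ge0}$ and an integer twist $k$. Legs are fixed points of $i$; edges are pairs $\{h,i(h)\}$ with $h\ne i(h)$; a directed edge is a non-leg half-edge $h$, with source $\mathrm{end}(h)$ and target $\mathrm{end}(i(h))$. The valence of $v$ is the number of non-leg half-edges at $v$, and $\kappa(v)=2g(v)-2+\mathrm{val}(v)$; $g(\Gamma)$ is the first Betti number plus $\sum_v g(v)$. A cycle is a closed walk of directed edges (target of each is the source of the next) repeating no vertex or undirected edge. A weighting is a function $w\colon H\to\mathbb Z$ with $w(h)+w(i(h))=0$ whenever $h\neq i(h)$, and $\sum_{\mathrm{end}(h)=v}w(h)+k\kappa(v)=0$ for every vertex $v$. A leg-weighted graph is a graph with a function from legs to $\mathbb Z$ summing to $-k(2g(\Gamma)-2)$; $W(\Gamma)$ is the set of weightings restricting to the given leg values. For a directed edge $e$ in a cycle $\gamma$, $w_\gamma(e)$ is the value of $w$ on the half-edge of $e$ at its source (in the direction of $\gamma$). A thickness $t\in\mathbb Q_{\ge0}^E$ is compatible with $w$ if $\sum_{e\in\gamma}w_\gamma(e)t(e)=0$ for every cycle $\gamma$; $c_w\subseteq\mathbb Q_{\ge0}^E$ is the rational polyhedral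 cone of thicknesses compatible with $w$. *)

From HB Require Import structures.
From mathcomp Require Import all_boot all_order all_algebra.
Set Implicit Arguments. Unset Strict Implicit. Unset Printing Implicit Defensive.
Import Order.TTheory GRing.Theory Num.Theory.
Local Open Scope ring_scope.

Record graph := Graph {
  gV : finType;
  gH : finType;
  gend : gH -> gV;
  ginv : gH -> gH;
  ginvK : involutive ginv;
  ggen : gV -> nat;
  gtwist : int }.

Section GraphDefs.
Variable G : graph.
Local Notation V := (gV G).
Local Notation H := (gH G).
Local Notation i := (@ginv G).
Local Notation endv := (@gend G).
Local Notation k := (@gtwist G).

Definition is_leg (h : H) : bool := i h == h.

Definition is_edge (e : {set H}) : bool :=
  [exists h, ~~ is_leg h && (e == [set h; i h])].
Definition edge : Type := {e : {set H} | is_edge e}.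

(* the undirected edge underlying a half-edge (None for legs) *)
Definition edge_of (h : H) : option edge := insub [set h; i h].

Definition valence (v : V) : nat := #|[set h : H | (endv h == v) && ~~ is_leg h]|.
Definition kappa (v : V) : int := 2 * (@ggen G v)%:Z - 2 + (valence v)%:Z.

Definition adj : rel V :=
  fun u v => [exists h, [&& ~~ is_leg h, endv h == u & endv (i h) == v]].
Definition connected_graph : Prop := forall u v : V, connect adj u v.

Definition ncomp : nat := #|[set fingraph.root adj v | v : V]|.
Definition betti1 : int := (#|{: edge}|)%:Z - (#|{: V}|)%:Z + (ncomp)%:Z.
Definition genus : int := betti1 + (\sum_(v : V) @ggen G v)%:Z.

Definition is_weighting (w : H -> int) : Prop :=
  (forall h, ~~ is_leg h -> w h + w (i h) = 0) /\
  (forall v : V, \sum_(h : H | endv h == v) w h + k * kappa v = 0).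

(* leg weights (values of l on non-legs are irrelevant) *)
Definition leg_weighting (l : H -> int) : Prop :=
  \sum_(h : H | is_leg h) l h = - (k * (2 * genus - 2)).

Definition in_W (l : H -> int) (w : H -> int) : Prop :=
  is_weighting w /\ (forall h, is_leg h -> w h = l h).

Definition is_cycle (c : seq H) : bool :=
  [&& c != [::], all (fun h => ~~ is_leg h) c,
      cycle (fun h h' => endv (i h) == endv h') c,
      uniq (map endv c) & uniq (map (fun h => [set h; i h]) c)].

Definition tval (t : {ffun edge -> rat}) (h : H) : rat :=
  if edge_of h is Some e then t e else 0.

Definition compatible (w : H -> int) (t : {ffun edge -> rat}) : Prop :=
  forall c, is_cycle c -> \sum_(h <- c) (w h)%:~R * tval t h = 0.

Definition cone_w (w : H -> int) (t : {ffun edge -> rat}) : Prop :=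
  (forall e, 0 <= t e) /\ compatible w t.

End GraphDefs.

Definition is_face (X : finType) (F C : {ffun X -> rat} -> Prop) : Prop :=
  exists l : {ffun X -> rat},
    (forall t, C t -> 0 <= \sum_(x : X) l x * t x) /\
    (forall t, F t <-> (C t /\ \sum_(x : X) l x * t x = 0)).

(* The difference d = w1 - w2 of two weightings with the same leg values is a
   flow: d (i h) = - d h, and the outflow of d at every vertex is 0.  Hence
   the vertices reachable from the target of a half-edge h with d h > 0 along
   half-edges of positive flow contain its source, so h lies on a cycle along
   which d is positive.  For t >= 0 compatible with w1, compatibility with w2
   is compatibility with d, and by the positive cycles this holds iff t
   vanishes on every edge where d is nonzero, i.e. iff sum_e L e * t e = 0
   for the nonnegative L e = sum of d h ^ 2 over the two halves h of e. *)

From Pilot Require Import Defs.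
From HB Require Import structures.
From mathcomp Require Import all_boot all_order all_algebra.
From mathcomp Require Import zify.
Set Implicit Arguments. Unset Strict Implicit. Unset Printing Implicit Defensive.
Import Order.TTheory GRing.Theory Num.Theory.
Local Open Scope ring_scope.

Section Edges.
Variable G : graph.
Implicit Types (h : gH G) (e : edge G) (t : {ffun edge G -> rat}).

Lemma edge_of_mem e h : h \in val e -> edge_of h = Some e.
Proof.
case: e => s es /= hs; rewrite /edge_of.
have -> : [set h; ginv h] = s.
  move: (es) hs => /existsP[h' /andP[_ /eqP ->]].
  by rewrite !inE => /orP[/eqP ->|/eqP ->]; rewrite ?ginvK 1?setUC.
by rewrite insubT.
Qed.

Lemma mem_edge_of h e : edge_of h = Some e -> h \in val e.
Proof. by rewrite /edge_of; case: insubP => // u _ vu [<-]; rewrite vu set21. Qed.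

Lemma tval_ginv t h : Defs.tval t (ginv h) = Defs.tval t h.
Proof. by rewrite /Defs.tval /edge_of ginvK setUC. Qed.

Lemma tval_ge0 t h : (forall e, 0 <= t e) -> 0 <= Defs.tval t h.
Proof. by rewrite /Defs.tval; case: (edge_of h). Qed.

End Edges.

Lemma compatibleB (G : graph) (w1 w2 : gH G -> int) (t : {ffun edge G -> rat}) :
  compatible w1 t -> compatible w2 t <-> compatible (fun h => w1 h - w2 h) t.
Proof.
move=> compat1; split=> compat c cyc_c; move: (compat1 c cyc_c) (compat c cyc_c).
  by move=> sum1 sum2; under eq_bigr do rewrite intrB mulrBl; rewrite sumrB sum1 sum2 subr0.
move=> sum1; under eq_bigr do rewrite intrB mulrBl; rewrite sumrB sum1 sub0r.
by move/eqP; rewrite oppr_eq0 => /eqP.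
Qed.

Section Flow.
Variables (G : graph) (d : gH G -> int).
Hypothesis d_ginv : forall h, d (ginv h) = - d h.
Hypothesis d_conserved : forall v, \sum_(h | gend h == v) d h = 0.

Definition flow_adj : rel (gV G) :=
  fun u v => [exists h, [&& 0 < d h, gend h == u & gend (ginv h) == v]].

Lemma flow_pos_nonleg h : 0 < d h -> ~~ is_leg h.
Proof. by move=> dh; apply/negP => /eqP hh; move: (d_ginv h); rewrite hh; lia. Qed.

Lemma flow_out_eq0 (R : {set gV G}) :
  \sum_(h | (gend h \in R) && (gend (ginv h) \notin R)) d h = 0.
Proof.
have sumR : \sum_(h | gend h \in R) d h = 0.
  rewrite (partition_big (@gend G) (mem R)) //=.
  apply: big1 => v vR; rewrite -[RHS](d_conserved v); apply: eq_bigl => h.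
  by case: (gend h =P v) => [->|_]; rewrite ?vR ?andbF.
have sum_inner : \sum_(h | (gend h \in R) && (gend (ginv h) \in R)) d h = 0.
  set S := (X in X = 0).
  suff : S = - S by lia.
  rewrite {1}/S (reindex_inj (inv_inj (@ginvK G))) /= -sumrN.
  by apply: eq_big => h; [rewrite ginvK andbC | rewrite d_ginv].
by rewrite (bigID (fun h => gend (ginv h) \in R)) /= sum_inner add0r in sumR.
Qed.

(* The vertices reachable from the target of h0 along positive half-edges have
   no positive outflow, yet ginv h0 carries negative flow out of them. *)
Lemma flow_adj_return h0 : 0 < d h0 -> connect flow_adj (gend (ginv h0)) (gend h0).
Proof.
move=> dh0; apply/negPn/negP => not_back.
pose R := [set v | connect flow_adj (gend (ginv h0)) v].
have h0_out : (gend (ginv h0) \in R) && (gend (ginv (ginv h0)) \notin R).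
  by rewrite ginvK !inE connect0.
have out_le0 : \sum_(h | (gend h \in R) && (gend (ginv h) \notin R) && (h != ginv h0))
    d h <= 0.
  apply: sumr_le0 => h /andP[/andP[hR hnR] _]; rewrite leNgt; apply/negP => dh.
  move: hnR; rewrite !inE in hR *; apply/negP/negPn.
  by apply: connect_trans hR (connect1 _); apply/existsP; exists h; rewrite dh !eqxx.
have := flow_out_eq0 R; rewrite (bigD1 (ginv h0)) //= d_ginv => sum0.
by move: out_le0; rewrite -(lerD2l (- d h0)) sum0 addr0 oppr_ge0 leNgt dh0.
Qed.

Lemma flow_path_lift x vs : path flow_adj x vs -> exists p : seq (gH G),
  [/\ all (fun h => 0 < d h) p, map (@gend G) p = belast x vs &
   forall h z, gend (ginv h) = x -> gend z = last x vs ->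
     path (fun a b => gend (ginv a) == gend b) h (rcons p z)].
Proof.
elim: vs x => [|v vs IH] x /=.
  by move=> _; exists [::]; split => // h z hx zl; rewrite /= hx zl eqxx.
case/andP => /existsP[h1 /and3P[dh1 /eqP e1 /eqP e2]] /IH[p [pos_p map_p path_p]].
exists (h1 :: p); split => /=; first by rewrite dh1.
  by rewrite map_p e1.
by move=> h z -> zl; rewrite e1 eqxx; apply: path_p.
Qed.

Lemma flow_pos_uniq_edges (c : seq (gH G)) : all (fun h => 0 < d h) c ->
  uniq (map (@gend G) c) -> uniq (map (fun h => [set h; ginv h]) c).
Proof.
move=> pos_c uniq_c; rewrite map_inj_in_uniq; first exact: map_uniq uniq_c.
move=> a b ain bin eab; have : b \in [set a; ginv a] by rewrite eab set21.
rewrite !inE => /orP[/eqP //| /eqP eb].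
by have := allP pos_c a ain; have := allP pos_c b bin; rewrite eb d_ginv; lia.
Qed.

Lemma flow_pos_cycle h0 : 0 < d h0 ->
  exists c, [/\ is_cycle c, h0 \in c & all (fun h => 0 < d h) c].
Proof.
move=> dh0; case/connectP: (flow_adj_return dh0) => vs path_vs.
case: (shortenP path_vs) => vs' path_vs' uniq_vs' _ last_vs'.
have [p [pos_p map_p path_p]] := flow_path_lift path_vs'.
have pos_c : all (fun h => 0 < d h) (h0 :: p) by rewrite /= dh0.
have uniq_c : uniq (map (@gend G) (h0 :: p)).
  by rewrite /= map_p last_vs'; move: uniq_vs'; rewrite lastI rcons_uniq.
exists (h0 :: p); split; rewrite ?mem_head //; apply/and5P; split => //.
- by apply: sub_all pos_c => h; apply: flow_pos_nonleg.
- exact: path_p.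
- exact: flow_pos_uniq_edges.
Qed.

Definition flow_weight : {ffun edge G -> rat} :=
  [ffun e : edge G => \sum_(h in val e) ((d h)%:~R : rat) ^+ 2].

Lemma flow_weight_ge0 e : 0 <= flow_weight e.
Proof. by rewrite ffunE sumr_ge0 // => h _; apply: sqr_ge0. Qed.

Lemma flow_weight_eq0P e : flow_weight e = 0 <-> {in val e, forall h, d h = 0}.
Proof.
rewrite ffunE; split => [/psumr_eq0P d0 h he | d0].
  by apply/eqP; rewrite -(eqr_int rat) -sqrf_eq0 d0 // => h' _; apply: sqr_ge0.
by apply: big1 => h he; rewrite d0 // expr0n.
Qed.

Lemma flow_weight_dot_eq0P (t : {ffun edge G -> rat}) : (forall e, 0 <= t e) ->
  \sum_e flow_weight e * t e = 0 <-> (forall h, d h != 0 -> Defs.tval t h = 0).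
Proof.
move=> t_ge0; split => [dot0 h dh | supp0].
  have term0 : forall e, 0 <= flow_weight e * t e.
    by move=> e; rewrite mulr_ge0 ?flow_weight_ge0.
  rewrite /Defs.tval; case E: (edge_of h) => [e|] //.
  have /eqP := psumr_eq0P (fun e _ => term0 e) dot0 (i := e) isT.
  rewrite mulf_eq0 => /orP[/eqP w0|/eqP //].
  by move/eqP: dh; have /flow_weight_eq0P -> := w0; last exact: mem_edge_of.
apply: big1 => e _; have [-> | w_ne0] := eqVneq (flow_weight e) 0.
  by rewrite mul0r.
have /exists_inP[h he dh] : [exists h in val e, d h != 0].
  apply: contraNT w_ne0 => /exists_inPn all0; apply/eqP/flow_weight_eq0P => h he.
  exact/eqP/negbNE/all0.
by move: (supp0 h dh); rewrite /Defs.tval (edge_of_mem he) => ->; rewrite mulr0.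
Qed.

(* A positive half-edge lies on a cycle along which every term of the
   compatibility sum is nonnegative, so its own term must vanish. *)
Lemma compatible_flowP (t : {ffun edge G -> rat}) : (forall e, 0 <= t e) ->
  compatible d t <-> (forall h, d h != 0 -> Defs.tval t h = 0).
Proof.
move=> t_ge0; split => [compat | supp0]; last first.
  move=> c _; apply: big1 => h _.
  by have [-> | /supp0 ->] := eqVneq (d h) 0; rewrite ?mul0r ?mulr0.
suff pos0 h : 0 < d h -> Defs.tval t h = 0.
  move=> h; case: (ltgtP (d h) 0) => [dneg _ | dpos _ | //].
    by rewrite -tval_ginv pos0 // d_ginv oppr_gt0.
  exact: pos0.
move=> dh; have [c [cyc_c hc pos_c]] := flow_pos_cycle dh.
have term_ge0 h' : h' \in c -> 0 <= (d h')%:~R * Defs.tval t h'.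
  by move=> h'c; rewrite mulr_ge0 ?tval_ge0 // ler0z ltW // (allP pos_c).
move/eqP: (compat c cyc_c); rewrite big_seq psumr_eq0 // => /allP/(_ h hc).
by rewrite hc mulf_eq0 intr_eq0 gt_eqF //= => /eqP.
Qed.

End Flow.

Section WeightingDifference.
Variables (G : graph) (w1 w2 : gH G -> int).
Hypotheses (w1_weighting : is_weighting w1) (w2_weighting : is_weighting w2).

Lemma weighting_diff_ginv : (forall h, is_leg h -> w1 h = w2 h) ->
  forall h, w1 (ginv h) - w2 (ginv h) = - (w1 h - w2 h).
Proof.
move=> legs h; have [/eqP hh | hnl] := boolP (is_leg h).
  by rewrite hh legs ?subrr ?oppr0 //; apply/eqP.
by have := w1_weighting.1 h hnl; have := w2_weighting.1 h hnl; lia.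
Qed.

Lemma weighting_diff_conserved v : \sum_(h | gend h == v) (w1 h - w2 h) = 0.
Proof.
apply/eqP; rewrite sumrB subr_eq0; apply/eqP/(addIr (gtwist G * kappa v)).
by rewrite w1_weighting.2 w2_weighting.2.
Qed.

End WeightingDifference.

Theorem lemma3p6 (G : graph) (l : gH G -> int) :
  connected_graph G -> leg_weighting l ->
  forall w1 w2 : gH G -> int, in_W l w1 -> in_W l w2 ->
  is_face (fun t => cone_w w1 t /\ cone_w w2 t) (cone_w w1).
Proof.
move=> _ _ w1 w2 [w1W w1l] [w2W w2l].
have legs h : is_leg h -> w1 h = w2 h by move=> hl; rewrite w1l ?w2l.
have d_ginv := weighting_diff_ginv w1W w2W legs.
have d_conserved := weighting_diff_conserved w1W w2W.
exists (flow_weight (fun h => w1 h - w2 h)); split.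
  by move=> t [t_ge0 _]; apply: sumr_ge0 => e _; rewrite mulr_ge0 ?flow_weight_ge0.
move=> t; split.
- move=> [[t_ge0 compat1] [_ compat2]]; split => //.
  apply/(flow_weight_dot_eq0P _ t_ge0)/(compatible_flowP d_ginv d_conserved t_ge0).
  exact: (iffLR (compatibleB w2 compat1)) compat2.
- move=> [[t_ge0 compat1] dot0]; split => //; split => //.
  apply/(compatibleB _ compat1)/(compatible_flowP d_ginv d_conserved t_ge0).
  exact/(flow_weight_dot_eq0P _ t_ge0).
Qed.
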